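(* For all $\boldsymbol\mu,\boldsymbol\mu'\in\mathcal P(\mathcal X\times[K])$ and every collection $\boldsymbol\pi=(\pi_k)_{k\in[K]}$ of decision rules $\pi_k:\mathcal X\times\mathcal P(\mathcal X\times[K])\to\mathcal P(\mathcal U)$ with $|\pi_k(x,\boldsymbol\mu_1)-\pi_k(x,\boldsymbol\mu_2)|_1\le L_Q|\boldsymbol\mu_1-\boldsymbol\mu_2|_1$ for all $x,k,\boldsymbol\mu_1,\boldsymbol\mu_2$, $$|P^{\mathrm{MF}}(\boldsymbol\mu,\boldsymbol\pi)-P^{\mathrm{MF}}(\boldsymbol\mu',\boldsymbol\pi)|_1\le S_P|\boldsymbol\mu-\boldsymbol\mu'|_1,\qquad S_P=(1+L_Q)+L_P(2+L_Q).$$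
   Context: $K\ge1$, $[K]=\{1,\dots,K\}$, $\mathcal X,\mathcal U$ finite, $\mathcal P(A)$ probability distributions on $A$, $|\cdot|_1$ the $L_1$ norm, $L_P,L_Q>0$. For each $k$, $P_k:\mathcal X\times\mathcal U\times\mathcal P(\mathcal X\times[K])\times\mathcal P(\mathcal U\times[K])\to\mathcal P(\mathcal X)$ satisfies $|P_k(x,u,\boldsymbol\mu_1,\boldsymbol\nu_1)-P_k(x,u,\boldsymbol\mu_2,\boldsymbol\nu_2)|_1\le L_P(|\boldsymbol\mu_1-\boldsymbol\mu_2|_1+|\boldsymbol\nu_1-\boldsymbol\nu_2|_1)$. Define $\nu^{\mathrm{MF}}(\boldsymbol\mu,\boldsymbol\pi)(u,k)=\sum_x\pi_k(x,\boldsymbol\mu)(u)\boldsymbol\mu(x,k)$ and $P^{\mathrm{MF}}(\boldsymbol\mu,\boldsymbol\pi)\in\mathcal P(\mathcal X\times[K])$ by $P^{\mathrm{MF}}(\boldsymbol\mu,\boldsymbol\pi)(x',k)=\sum_{x\in\mathcal X}\sum_{u\in\mathcal U}\boldsymbol\mu(x,k)\pi_k(x,\boldsymbol\mu)(u)P_k(x,u,\boldsymbol\mu,\nu^{\mathrm{MF}}(\boldsymbol\mu,\boldsymbol\pi))(x')$. *)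

From HB Require Import structures.
From mathcomp Require Import all_boot all_order all_algebra.
Set Implicit Arguments. Unset Strict Implicit. Unset Printing Implicit Defensive.
Import Order.TTheory GRing.Theory Num.Theory.
Local Open Scope ring_scope.

Section Defs.
Variable R : realFieldType.

Definition is_distr (T : finType) (p : {ffun T -> R}) : Prop :=
  (forall t, 0 <= p t) /\ \sum_t p t = 1.

Definition l1dist (T : finType) (f g : {ffun T -> R}) : R :=
  \sum_t `|f t - g t|.

Variables (X U : finType) (K : nat).

Definition policy := 'I_K -> X -> {ffun X * 'I_K -> R} -> {ffun U -> R}.
Definition kernel :=
  'I_K -> X -> U -> {ffun X * 'I_K -> R} -> {ffun U * 'I_K -> R} -> {ffun X -> R}.

Definition nuMF (mu : {ffun X * 'I_K -> R}) (pi : policy) : {ffun U * 'I_K -> R} :=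
  [ffun uk => \sum_(x : X) pi uk.2 x mu uk.1 * mu (x, uk.2)].

Definition PMF (P : kernel) (mu : {ffun X * 'I_K -> R}) (pi : policy)
  : {ffun X * 'I_K -> R} :=
  [ffun xk => \sum_(x : X) \sum_(u : U)
      mu (x, xk.2) * pi xk.2 x mu u * P xk.2 x u mu (nuMF mu pi) xk.1].

End Defs.

(* Each transition is a two-stage mixture: draw x from mu, u from pi_k(x, mu),
   then x' from P_k(x, u, mu, nu).  Changing the weights of a mixture of
   distributions moves it by at most the L1 change of the weights, and changing
   the mixed distributions moves it by at most their weighted L1 change.  One
   such step bounds the change of the joint law of (x, u) by (1 + L_Q)|mu - mu'|,
   which also bounds the change of nu^MF; a second step adds
   L_P (|mu - mu'| + |nu - nu'|) <= L_P (2 + L_Q)|mu - mu'|. *)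

From HB Require Import structures.
From mathcomp Require Import all_boot all_order all_algebra.
From mathcomp Require Import ring.
Set Implicit Arguments. Unset Strict Implicit. Unset Printing Implicit Defensive.
Import Order.TTheory GRing.Theory Num.Theory.
Local Open Scope ring_scope.

Section Mixtures.
Variable R : realFieldType.

Lemma distr_sumMr (T : finType) (p : {ffun T -> R}) c :
  is_distr p -> \sum_t p t * c = c.
Proof. by case=> _ p1; rewrite -mulr_suml p1 mul1r. Qed.

Lemma distr_sumMl (T : finType) (p : {ffun T -> R}) c :
  is_distr p -> \sum_t c * p t = c.
Proof. by case=> _ p1; rewrite -mulr_sumr p1 mulr1. Qed.

Lemma sum_pair_swap (A B : finType) (F : A * B -> R) :
  \sum_t F t = \sum_b \sum_a F (a, b).
Proof.
rewrite exchange_big /= (pair_big predT predT (fun a b => F (a, b))) /=.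
by apply: eq_bigr => -[].
Qed.

Lemma normrBM (a a' b b' : R) : 0 <= b -> 0 <= a' ->
  `|a * b - a' * b'| <= `|a - a'| * b + a' * `|b - b'|.
Proof.
move=> b_ge0 a'_ge0.
have -> : a * b - a' * b' = (a - a') * b + a' * (b - b') by ring.
apply: (le_trans (ler_normD _ _)).
by rewrite !normrM (ger0_norm b_ge0) (ger0_norm a'_ge0).
Qed.

Variables T S : finType.

Lemma l1_marginal (f g : T -> S -> R) :
  \sum_s `|\sum_t f t s - \sum_t g t s| <= \sum_t \sum_s `|f t s - g t s|.
Proof.
rewrite [leRHS]exchange_big; apply: ler_sum => s _.
by rewrite -sumrB; exact: ler_norm_sum.
Qed.

Variables (w w' : T -> R) (q q' : T -> {ffun S -> R}).
Hypotheses (q_distr : forall t, is_distr (q t)) (w'_ge0 : forall t, 0 <= w' t).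

Lemma l1_joint :
  \sum_t \sum_s `|w t * q t s - w' t * q' t s|
    <= \sum_t `|w t - w' t| + \sum_t w' t * l1dist (q t) (q' t).
Proof.
rewrite -big_split; apply: ler_sum => t _ /=.
have [q_ge0 _] := q_distr t.
apply: le_trans
  (ler_sum _ (fun s _ => normrBM (w t) (q' t s) (q_ge0 s) (w'_ge0 t))) _.
by rewrite big_split /= distr_sumMl // -mulr_sumr.
Qed.

Lemma l1_mixture :
  \sum_s `|\sum_t w t * q t s - \sum_t w' t * q' t s|
    <= \sum_t `|w t - w' t| + \sum_t w' t * l1dist (q t) (q' t).
Proof. exact: le_trans (l1_marginal _ _) l1_joint. Qed.

End Mixtures.

Arguments l1_joint {R T S} w w' q q'.
Arguments l1_mixture {R T S} w w' q q'.

Section MeanField.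
Variables (R : realFieldType) (X U : finType) (K : nat).
Variables (pi : policy R X U K) (LQ : R).
Hypothesis pi_distr : forall k x {m}, is_distr m -> is_distr (pi k x m).
Hypothesis pi_lipschitz : forall k x m1 m2, is_distr m1 -> is_distr m2 ->
  l1dist (pi k x m1) (pi k x m2) <= LQ * l1dist m1 m2.

Lemma nuMF_distr mu : is_distr mu -> is_distr (nuMF mu pi).
Proof.
move=> mu_distr; have [mu_ge0 mu1] := mu_distr; split.
  move=> [u k]; rewrite ffunE; apply: sumr_ge0 => x _; apply: mulr_ge0 => //.
  by case: (pi_distr k x mu_distr).
rewrite sum_pair_swap -mu1 sum_pair_swap; apply: eq_bigr => k _.
under eq_bigr do rewrite ffunE /=.
rewrite exchange_big; apply: eq_bigr => x _.
by rewrite distr_sumMr //; exact: pi_distr.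
Qed.

Variables (mu mu' : {ffun X * 'I_K -> R}).
Hypotheses (mu_distr : is_distr mu) (mu'_distr : is_distr mu').

Lemma sum_classwise_l1 c :
  \sum_k (\sum_x `|mu (x, k) - mu' (x, k)| + c * \sum_x mu' (x, k))
    = l1dist mu mu' + c.
Proof.
rewrite big_split /= /l1dist sum_pair_swap; congr (_ + _).
by rewrite -mulr_sumr -sum_pair_swap; case: mu'_distr => _ ->; rewrite mulr1.
Qed.

Lemma l1_state_action k :
  \sum_x \sum_u `|mu (x, k) * pi k x mu u - mu' (x, k) * pi k x mu' u|
    <= \sum_x `|mu (x, k) - mu' (x, k)|
       + LQ * l1dist mu mu' * \sum_x mu' (x, k).
Proof.
have [mu'_ge0 _] := mu'_distr.
apply: le_trans (l1_joint _ _ _ _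
  (fun x => pi_distr k x mu_distr) (fun x => mu'_ge0 (x, k))) _.
apply: lerD => //; rewrite mulr_sumr; apply: ler_sum => x _.
by rewrite [leRHS]mulrC; apply: ler_wpM2l => //; exact: pi_lipschitz.
Qed.

Lemma l1dist_nuMF :
  l1dist (nuMF mu pi) (nuMF mu' pi) <= (1 + LQ) * l1dist mu mu'.
Proof.
rewrite /l1dist sum_pair_swap mulrDl mul1r -(sum_classwise_l1 (LQ * _)).
apply: ler_sum => k _; under eq_bigr do rewrite !ffunE /=.
apply: le_trans (l1_marginal _ _) _.
under eq_bigr do under eq_bigr do rewrite mulrC [pi k _ mu' _ * _]mulrC.
exact: l1_state_action.
Qed.

Variables (P : kernel R X U K) (LP : R).
Hypothesis P_distr : forall k x u {mu nu}, is_distr mu -> is_distr nu ->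
  is_distr (P k x u mu nu).
Hypothesis P_lipschitz : forall k x u mu1 nu1 mu2 nu2,
  is_distr mu1 -> is_distr nu1 -> is_distr mu2 -> is_distr nu2 ->
  l1dist (P k x u mu1 nu1) (P k x u mu2 nu2)
    <= LP * (l1dist mu1 mu2 + l1dist nu1 nu2).

Lemma l1dist_PMF :
  l1dist (PMF P mu pi) (PMF P mu' pi)
    <= (1 + LQ) * l1dist mu mu'
       + LP * (l1dist mu mu' + l1dist (nuMF mu pi) (nuMF mu' pi)).
Proof.
set e := LP * _; have [mu'_ge0 _] := mu'_distr.
rewrite [l1dist (PMF _ _ _) _]/l1dist sum_pair_swap mulrDl mul1r -addrA.
rewrite -(sum_classwise_l1 (_ + e)).
apply: ler_sum => k _; under eq_bigr do rewrite !ffunE /= !pair_bigA /=.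
apply: le_trans (l1_mixture
  (fun p => mu (p.1, k) * pi k p.1 mu p.2)
  (fun p => mu' (p.1, k) * pi k p.1 mu' p.2)
  (fun p => P k p.1 p.2 mu (nuMF mu pi))
  (fun p => P k p.1 p.2 mu' (nuMF mu' pi)) _ _) _.
- by move=> p; apply: P_distr => //; exact: nuMF_distr.
- by move=> p; apply: mulr_ge0 => //; case: (pi_distr k p.1 mu'_distr).
rewrite mulrDl addrA; apply: lerD.
  by move: (l1_state_action k); rewrite pair_bigA.
have -> : e * \sum_x mu' (x, k) = \sum_x \sum_u mu' (x, k) * pi k x mu' u * e.
  rewrite mulr_sumr; apply: eq_bigr => x _.
  under [RHS]eq_bigr do rewrite -mulrA.
  by rewrite -mulr_sumr (distr_sumMr _ (pi_distr k x mu'_distr)) mulrC.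
rewrite pair_bigA; apply: ler_sum => -[x u] _ /=; apply: ler_wpM2l.
  by apply: mulr_ge0 => //; case: (pi_distr k x mu'_distr).
by apply: P_lipschitz => //; exact: nuMF_distr.
Qed.

End MeanField.

Theorem lemma4 (R : realFieldType) (X U : finType) (K : nat) (hK : (0 < K)%N)
  (LP LQ : R) (hLP : 0 < LP) (hLQ : 0 < LQ)
  (P : kernel R X U K)
  (hPd : forall k x u mu nu, is_distr mu -> is_distr nu ->
           is_distr (P k x u mu nu))
  (hPL : forall k x u mu1 nu1 mu2 nu2,
           is_distr mu1 -> is_distr nu1 -> is_distr mu2 -> is_distr nu2 ->
           l1dist (P k x u mu1 nu1) (P k x u mu2 nu2)
             <= LP * (l1dist mu1 mu2 + l1dist nu1 nu2))
  (mu mu' : {ffun X * 'I_K -> R}) (hmu : is_distr mu) (hmu' : is_distr mu')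
  (pi : policy R X U K)
  (hpid : forall k x m, is_distr m -> is_distr (pi k x m))
  (hpiL : forall k x m1 m2, is_distr m1 -> is_distr m2 ->
           l1dist (pi k x m1) (pi k x m2) <= LQ * l1dist m1 m2) :
  l1dist (PMF P mu pi) (PMF P mu' pi)
    <= ((1 + LQ) + LP * (2 + LQ)) * l1dist mu mu'.
Proof.
apply: le_trans (l1dist_PMF hpid hpiL hmu hmu' hPd hPL) _.
have -> : ((1 + LQ) + LP * (2 + LQ)) * l1dist mu mu'
  = (1 + LQ) * l1dist mu mu' + LP * (l1dist mu mu' + (1 + LQ) * l1dist mu mu')
  by ring.
rewrite lerD2l ler_wpM2l ?(ltW hLP) // lerD2l.
exact: l1dist_nuMF.
Qed.
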